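(* In the basic model with an odd number $n$ of agents: - the leader election problem and the nontrivial move problem can each be solved in $O(\log N)$ rounds; - the location discovery problem can be solved in $n+O(\log N)$ rounds.
   Context: Model (basic): $n>4$ agents are at distinct, arbitrary initial positions on a circle of circumference $1$ and act in synchronised unit-time rounds. Each agent has its own notion of right (clockwise) and left; these need not be consistent across agents. At the start of each round every agent chooses a direction in $\{\text{right},\text{left}\}$ and moves at unit speed. Agents never pass: colliding agents instantly reverse direction. There is no communication. At the end of a round each agent learns only the clockwise distance, in its own orientation, from its start to its end position. Agents have distinct IDs in $\{1,\dots,N\}$, $N\ge n$ known, and know the parity of $n$. Rotation index: if $n_C$ agents start clockwise and $n_A$ anticlockwise (objective orientation), each agent moves to the initial position of the agent $(n_C-n_A)\bmod n$ places clockwise. A nontrivial move is a round with rotation index not in $\{0,n/2\}$. Problems: - Nontrivial move problem: assign each agent a direction so that the round in which all start in these directions is a nontrivial move. - Leader election: exactly one agent is ''leader''. - Location discovery: each agent determines the initial positions of all other agents relative to its own initial position. *)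

From HB Require Import structures.
From mathcomp Require Import all_boot all_order all_algebra.
From mathcomp Require Import reals.
Set Implicit Arguments. Unset Strict Implicit. Unset Printing Implicit Defensive.
Import Order.TTheory GRing.Theory Num.Theory.
Local Open Scope ring_scope.

(** Agents are indexed by ['I_n] in the (objective) clockwise order of their
  initial positions: agent [i] starts at [p i], with [0 <= p i < 1] and
  [p] strictly increasing.  [o i = true] iff agent [i]'s "right" is the
  objective clockwise direction.  [id i] is agent [i]'s identifier.

  A deterministic algorithm (for a known bound [N]) is a strategy
  [S : nat -> seq R -> bool]: agent with ID [k] and history of observations
  [h] (oldest first) moves right (in its own orientation) iff [S k h]. *)

Section Model.
Variable R : realType.

Definition cwd (a b : R) : R := if a <= b then b - a else 1 + b - a.

Definition rot n (k : 'I_n) (r : nat) : 'I_n :=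
  Ordinal (ltn_pmod (k + r) (leq_ltn_trans (leq0n k) (ltn_ord k))).

(** rotation index of a round, given the set of agents moving objectively
    clockwise: ((n_C - n_A) mod n) = (2 n_C) mod n, since n_A = n - n_C *)
Definition rotation_index (n : nat) (cw : 'I_n -> bool) : nat :=
  ((2 * #|[pred i | cw i]|) %% n)%N.

Definition nontrivial (n : nat) (r : nat) : bool :=
  ((r %% n != 0) && (2 * (r %% n) != n))%N.

Variables (n : nat) (p : 'I_n -> R) (o : 'I_n -> bool) (id : 'I_n -> nat).

Definition observed (i : 'I_n) (a b : 'I_n) : R :=
  if o i then cwd (p a) (p b) else cwd (p b) (p a).

(** Execution of [t] rounds of strategy [S]: returns the cumulative rotation
    [sh] (agent [i] is then at initial position of agent [rot i sh]) and the
    histories of observations of every agent. *)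
Fixpoint run (S : nat -> seq R -> bool) (t : nat) : nat * ('I_n -> seq R) :=
  match t with
  | 0 => (0%N, fun _ => [::])
  | t'.+1 =>
    let: (sh, h) := run S t' in
    let cw := fun i => S (id i) (h i) == o i in
    let r := rotation_index cw in
    ((sh + r)%N, fun i => rcons (h i) (observed i (rot i sh) (rot i (sh + r))))
  end.

Definition history (S : nat -> seq R -> bool) (t : nat) (i : 'I_n) : seq R :=
  (run S t).2 i.

Definition valid_instance (N : nat) : Prop :=
  [/\ (4 < n)%N, (n <= N)%N, injective id, (forall i, 1 <= id i <= N)%N
    & (forall i, 0 <= p i < 1) /\ (forall i j : 'I_n, (i < j)%N -> p i < p j)].

Definition relative_positions (i : 'I_n) : seq R :=
  [seq observed i i j | j <- enum 'I_n & j != i].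

End Model.

(* Agents never see each other, but as everybody moves by the same rotation, an agent can
   tell whether the cumulative rotations after rounds l and m agree modulo n, and all agents
   get the same answer.  Since n is odd, a round in which c agents move clockwise rotates by
   2c, which vanishes modulo n iff n divides c.

   Leader election treats one bit of the IDs every four rounds: a round where everybody goes
   right followed by a round where only the candidates with the bit set (resp. clear) go
   right returns to its start iff n divides the number of clockwise moves of the pair.  If
   the pair of one class does not return, the other class is discarded.  If both return, an
   invariant (such a divisibility for the whole candidate set forces all agents to share
   their orientation) shows that one class is empty, so the candidates agree on the bit.
   After log N bits exactly one candidate is left.

   The leader then reverses in every round that is a positive multiple of the period of the
   rotation with everybody going right.  Each reversal shifts the rotation by a unit modulo
   the gcd of that rotation with n, so the cumulative rotations of the first n rounds are
   pairwise distinct: every agent visits all initial positions, and it recognises the end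
   of the tour as the first round repeating a position seen after the period.  A
   nontrivial move is a round where everybody goes right, except the leader when this
   round would be trivial. *)

From HB Require Import structures.
From mathcomp Require Import all_boot all_order all_algebra.
From mathcomp Require Import reals.
From mathcomp Require Import zify lra.
Set Implicit Arguments. Unset Strict Implicit. Unset Printing Implicit Defensive.
Import Order.TTheory GRing.Theory Num.Theory.

Lemma card_sum (T : finType) (P : {pred T}) : #|P| = \sum_(i : T) (i \in P).
Proof. by rewrite -sum1_card big_mkcond; apply: eq_bigr => i _; case: (i \in P). Qed.

Lemma card_le_ord n (A : {set 'I_n}) : #|A| <= n.
Proof. by rewrite -[n in _ <= n]card_ord max_card. Qed.

Lemma dvdn_bounded m d : m <= d -> d %| m -> (m == 0) || (m == d).
Proof.
move=> le_md; have [->|m_gt0] := posnP m => // /(dvdn_leq m_gt0) le_dm.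
by rewrite eqn_leq le_md le_dm orbT.
Qed.

Lemma eqn_modDr_dvd n a b : (a == a + b %[mod n]) = (n %| b).
Proof. by rewrite -{1}(addn0 a) eqn_modDl mod0n eq_sym. Qed.

Lemma dvdn_double n x : odd n -> (n %| 2 * x) = (n %| x).
Proof. by move=> n_odd; rewrite Gauss_dvdr // coprimen2. Qed.

Lemma eqn_modM2r_coprime a b c d : coprime d c -> a * c = b * c %[mod d] -> a = b %[mod d].
Proof.
move=> cop_dc; wlog le_ba : a b / b <= a.
  move=> W; case: (leqP b a) => [/W //|/ltnW le_ab /esym ab].
  exact/esym/(W _ _ le_ab).
move/eqP; rewrite eqn_mod_dvd ?leq_mul2r ?le_ba ?orbT // -mulnBl Gauss_dvdl //.
by move=> dvd_d; apply/eqP; rewrite eqn_mod_dvd.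
Qed.

Lemma nontrivial_double n c : odd n -> ~~ (n %| c) -> nontrivial n ((2 * c) %% n).
Proof.
move=> n_odd c_ndvd; rewrite /nontrivial modn_mod -/(dvdn _ _) dvdn_double // c_ndvd /=.
by apply/eqP => e; move: n_odd; rewrite -e mul2n odd_double.
Qed.

Section Orientation.
Variables (n : nat) (o : 'I_n -> bool).

(* agents moving clockwise when exactly those of [Y] go right in their own orientation *)
Definition clockwise_count (Y : {set 'I_n}) := #|[pred i | (i \in Y) == o i]|.
Definition nright := #|[set i | o i]|.

Lemma clockwise_count_card Y :
  clockwise_count Y + nright + #|Y| = n + 2 * #|Y :&: [set i | o i]|.
Proof.
transitivity (\sum_(i < n) (1 + 2 * (i \in Y :&: [set i | o i]))).
  rewrite /clockwise_count /nright !card_sum -!big_split; apply: eq_bigr => i _.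
  by rewrite !inE; case: (i \in Y); case: (o i).
by rewrite big_split sum1_card card_ord -big_distrr -card_sum.
Qed.

Lemma rotation_index_set (right : 'I_n -> bool) (Y : {set 'I_n}) :
  (forall i, right i = (i \in Y)) ->
  rotation_index (fun i => right i == o i) = (2 * clockwise_count Y) %% n.
Proof.
move=> rightY; rewrite /rotation_index; congr ((2 * _) %% n).
by apply: eq_card => i; rewrite !inE rightY.
Qed.

Lemma clockwise_count_le Y : clockwise_count Y <= n.
Proof. by rewrite -[n in _ <= n]card_ord max_card. Qed.

Lemma orient_le_nright i : o i <= nright.
Proof. by case oi: (o i) => //; rewrite card_gt0; apply/set0Pn; exists i; rewrite inE. Qed.

Lemma clockwise_countT : clockwise_count setT = nright.
Proof. by apply: eq_card => i; rewrite !inE. Qed.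

Lemma clockwise_count0 : clockwise_count set0 + nright = n.
Proof.
rewrite /clockwise_count /nright !card_sum -[RHS]card_ord -sum1_card -big_split /=.
by apply: eq_bigr => i _; rewrite !inE; case: (o i).
Qed.

Lemma clockwise_count_pairID (C W : {set 'I_n}) :
  nright + clockwise_count (C :&: W) + (nright + clockwise_count (C :\: W)) =
  n + (nright + clockwise_count C).
Proof.
suff : clockwise_count (C :&: W) + clockwise_count (C :\: W) =
       clockwise_count set0 + clockwise_count C by have := clockwise_count0; lia.
rewrite /clockwise_count !card_sum -!big_split /=; apply: eq_bigr => i _.
by rewrite !inE; case: (i \in C); case: (i \in W); case: (o i).
Qed.

Lemma clockwise_countC1 L : clockwise_count (~: [set L]) = nright + 1 - 2 * o L.
Proof.
have := clockwise_count_card (~: [set L]).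
have -> : ~: [set L] :&: [set i | o i] = [set i | o i] :\ L.
  by apply/setP => i; rewrite !inE andbC.
have := card_le_ord [set i | o i]; have := ltn_ord L.
rewrite cardsC1 card_ord /nright (cardsD1 L [set i | o i]) !inE.
rewrite -subn1; case: (o L) => /=; move: (clockwise_count _) #|_ :\ L| => c q; lia.
Qed.

Lemma nright_consensus Y : n %| nright -> n %| nright + clockwise_count Y ->
  (#|Y| == 0) || (#|Y| == n).
Proof.
move=> /(dvdn_bounded (card_le_ord _)) /orP[] /eqP; rewrite -/nright => rn.
all: have := clockwise_count_card Y.
- have -> : Y :&: [set i | o i] = set0.
    by apply/eqP; rewrite -cards_eq0 -leqn0 -rn subset_leq_card ?subsetIr.
  rewrite cards0 rn add0n => e; have -> : clockwise_count Y = n - #|Y| by lia.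
  by move/(dvdn_bounded (leq_subr _ _)); have := card_le_ord Y; lia.
- have -> : [set i | o i] = setT.
    by apply/eqP; rewrite eqEcard subsetT cardsT card_ord -[X in _ <= X]/nright rn leqnn.
  rewrite setIT rn => e; have -> : clockwise_count Y = #|Y| by lia.
  rewrite dvdn_addr // => /(dvdn_bounded (card_le_ord Y)).
  by rewrite orbC.
Qed.

Lemma nright_consensusID (C W : {set 'I_n}) : n %| nright ->
  n %| nright + clockwise_count (C :&: W) -> n %| nright + clockwise_count (C :\: W) ->
  (C :&: W == set0) || (C :\: W == set0).
Proof.
move=> r_dvd /(nright_consensus r_dvd) sizeI /(nright_consensus r_dvd) sizeD.
rewrite -!cards_eq0; have := cardsID W C; have := card_le_ord C; lia.
Qed.

End Orientation.

Definition bitn j k := odd (k %/ 2 ^ j).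

Lemma bitn_inj K a b : a < 2 ^ K -> b < 2 ^ K ->
  (forall j, j < K -> bitn j a = bitn j b) -> a = b.
Proof.
elim: K a b => [|K IH] a b; first by rewrite !ltnS !leqn0 => /eqP-> /eqP->.
move=> a_lt b_lt same_bits; rewrite -(odd_double_half a) -(odd_double_half b).
have := same_bits 0 isT; rewrite /bitn !divn1 => ->; congr (_ + _.*2).
apply: IH; rewrite -?divn2 ?ltn_divLR // -?expnSr //.
by move=> j lt_jK; have := same_bits j.+1 lt_jK; rewrite /bitn expnS !divnMA !divn2.
Qed.

Fixpoint first_hit (P : pred nat) M :=
  if M is M'.+1 then
    if 0 < first_hit P M' then first_hit P M' else if P M then M else 0
  else 0.

Lemma eq_first_hit P Q M : (forall k, k <= M -> P k = Q k) -> first_hit P M = first_hit Q M.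
Proof.
elim: M => [|M IH] PQ //=; rewrite PQ // IH // => k /leqW; exact: PQ.
Qed.

Lemma first_hit_eq P M m : 0 < m ->
  (forall k, 0 < k < m -> k <= M -> ~~ P k) -> (m <= M -> P m) ->
  first_hit P M = if m <= M then m else 0.
Proof.
move=> m_gt0; elim: M => [|M IH] P_before P_at /=; first by rewrite leqNgt m_gt0.
have -> : first_hit P M = if m <= M then m else 0.
  by apply: IH => [k k_lt /leqW|/leqW]; [exact: P_before | exact: P_at].
have [le_mM|lt_Mm|eq_mM] := ltngtP m M.+1.
- by move: le_mM; rewrite ltnS => ->; rewrite m_gt0.
- by rewrite (leqNgt m M) (ltnW lt_Mm) /= ifN // P_before // lt_Mm.
- by subst m; rewrite ltnn /= P_at.
Qed.

Section Protocol.
Variables (K : nat) (same : nat -> nat -> bool).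

Definition tour_start := 4 * K.

Fixpoint candidate k j : bool :=
  if j is j'.+1 then
    candidate k j' &&
      (if ~~ same (4 * j') (4 * j').+2 then bitn j' k
       else if ~~ same (4 * j').+2 (4 * j'.+1) then ~~ bitn j' k else true)
  else true.

Definition tour_period := first_hit (fun m => same tour_start (tour_start + m)).

Definition leader_turns s := (0 < tour_period s) && (tour_period s %| s).

Definition protocol k t : bool :=
  if t < tour_start then
    ~~ odd t || candidate k (t %/ 4) &&
      (if t %% 4 == 1 then bitn (t %/ 4) k else ~~ bitn (t %/ 4) k)
  else ~~ (candidate k K && leader_turns (t - tour_start)).

Definition revisits L s :=
  [&& 0 < L, L < s & has (fun l => same (tour_start + l) (tour_start + s)) (iota 0 s)].

Definition first_revisit L := first_hit (revisits L).

End Protocol.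

Section Election.
Variables (n : nat) (o : 'I_n -> bool) (id : 'I_n -> nat) (K : nat) (shift : nat -> nat).
Hypothesis n_odd : odd n.

Local Notation cc := (clockwise_count o).
Local Notation nright := (nright o).

Definition same_pos l m := shift l == shift m %[mod n].
Definition movers t := [set i | protocol K same_pos (id i) t].

Hypothesis shiftS : forall t,
  shift t.+1 = shift t + rotation_index (fun i : 'I_n => protocol K same_pos (id i) t == o i).

Lemma n_gt0 : 0 < n.
Proof. by case: n n_odd. Qed.

Lemma coprime_n2 : coprime n 2.
Proof. by rewrite coprimen2. Qed.

Lemma shiftS_count t : shift t.+1 = shift t + (2 * cc (movers t)) %% n.
Proof.
by rewrite shiftS (@rotation_index_set _ o _ (movers t)) // => i; rewrite inE.
Qed.

Lemma same_posS t : same_pos t t.+1 = (n %| cc (movers t)).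
Proof. by rewrite /same_pos shiftS_count eqn_modDr_dvd /dvdn modn_mod -/(dvdn _ _) dvdn_double. Qed.

Lemma same_posSS t : same_pos t t.+2 = (n %| cc (movers t) + cc (movers t.+1)).
Proof.
rewrite /same_pos !shiftS_count -addnA eqn_modDr_dvd /dvdn modnDm -mulnDr.
by rewrite -/(dvdn _ _) dvdn_double.
Qed.

Definition candidates j := [set i | candidate same_pos (id i) j].
Definition with_bit j := [set i | bitn j (id i)].

Lemma movers_election j q : j < K -> q < 4 -> movers (4 * j + q) =
  if ~~ odd q then setT
  else if q == 1 then candidates j :&: with_bit j else candidates j :\: with_bit j.
Proof.
move=> lt_jK lt_q4; apply/setP => i; rewrite /movers /protocol /tour_start !inE.
have -> : 4 * j + q < 4 * K by lia.
have -> : (4 * j + q) %% 4 = q by lia.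
have -> : (4 * j + q) %/ 4 = j by lia.
rewrite oddD oddM /=.
by case: q lt_q4 => [|[|[|[|]]]] //= _; rewrite !inE // andbC.
Qed.

Lemma same_pos_bit1 j : j < K ->
  same_pos (4 * j) (4 * j).+2 = (n %| nright + cc (candidates j :&: with_bit j)).
Proof.
move=> lt_jK; rewrite same_posSS.
have := movers_election lt_jK (isT : 0 < 4); have := movers_election lt_jK (isT : 1 < 4).
by rewrite addn0 addn1 /= => -> ->; rewrite clockwise_countT.
Qed.

Lemma same_pos_bit0 j : j < K ->
  same_pos (4 * j).+2 (4 * j.+1) = (n %| nright + cc (candidates j :\: with_bit j)).
Proof.
move=> lt_jK; rewrite (_ : 4 * j.+1 = (4 * j).+2.+2) ?same_posSS; last by lia.
have := movers_election lt_jK (isT : 2 < 4); have := movers_election lt_jK (isT : 3 < 4).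
by rewrite addn2 addn3 /= => -> ->; rewrite clockwise_countT.
Qed.

Lemma candidatesS j : j < K -> candidates j.+1 =
  if ~~ (n %| nright + cc (candidates j :&: with_bit j)) then candidates j :&: with_bit j
  else if ~~ (n %| nright + cc (candidates j :\: with_bit j)) then candidates j :\: with_bit j
  else candidates j.
Proof.
move=> lt_jK; rewrite -same_pos_bit1 // -same_pos_bit0 //.
apply/setP => i; rewrite !inE /=.
by case: ifP; rewrite ?inE //; case: ifP; rewrite ?inE ?andbT // andbC.
Qed.

Definition election_invariant j := [/\ candidates j != set0,
  n %| nright + cc (candidates j) -> n %| nright &
  {in candidates j &, forall i i' j', j' < j -> bitn j' (id i) = bitn j' (id i')}].

Lemma election_invariant0 : election_invariant 0.
Proof.
have candT : candidates 0 = setT by apply/setP => i; rewrite !inE.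
rewrite /election_invariant candT clockwise_countT addnn -mul2n dvdn_double //.
by split=> //; apply/set0Pn; exists (Ordinal n_gt0).
Qed.

Lemma election_invariantS j : j < K -> election_invariant j -> election_invariant j.+1.
Proof.
move=> lt_jK [C_n0 C_consensus C_bits]; rewrite /election_invariant candidatesS //.
have pair0 : n %| nright + cc set0 by rewrite addnC clockwise_count0.
have bits_sub (C' : {set 'I_n}) : C' \subset candidates j ->
    {in C' &, forall i i', bitn j (id i) = bitn j (id i')} ->
    {in C' &, forall i i' j', j' < j.+1 -> bitn j' (id i) = bitn j' (id i')}.
  move=> /subsetP sub bit_j i i' Ci Ci' j'; rewrite ltnS leq_eqVlt => /predU1P[->|].
    exact: bit_j.
  exact: C_bits i i' (sub _ Ci) (sub _ Ci') j'.
set A := candidates j :&: with_bit j; set B := candidates j :\: with_bit j.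
have [A_div|A_ndiv] := boolP (n %| nright + cc A); last first.
  split=> /=; [by apply: contraNneq A_ndiv => -> | by move/(negP A_ndiv) |].
  by apply: bits_sub; [exact: subsetIl | move=> i i'; rewrite !inE => /andP[_ ->] /andP[_ ->]].
have [B_div|B_ndiv] := boolP (n %| nright + cc B); last first.
  split=> /=; [by apply: contraNneq B_ndiv => -> | by move/(negP B_ndiv) |].
  apply: bits_sub; [exact: subsetDl | move=> i i'; rewrite !inE].
  by move=> /andP[/negbTE -> _] /andP[/negbTE -> _].
rewrite /=; split=> //; apply: bits_sub => //.
have C_div : n %| nright + cc (candidates j).
  by rewrite -(dvdn_addr _ (dvdnn n)) -(clockwise_count_pairID o _ (with_bit j)) dvdn_add.
have := nright_consensusID (C_consensus C_div) A_div B_div.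
case/orP=> /eqP/setP empty i i'; rewrite !inE => Ci Ci'; have := empty i; have := empty i'.
  by rewrite !inE Ci Ci' /= => -> ->.
by rewrite !inE Ci Ci' !andbT => /negbFE -> /negbFE ->.
Qed.

Hypothesis id_inj : injective id.
Hypothesis id_lt : forall i, id i < 2 ^ K.

Lemma leader_exists : exists L, candidates K = [set L].
Proof.
have [nonempty _ bits] : election_invariant K.
  suff inv j : j <= K -> election_invariant j by exact: inv.
  elim: j => [|j IH] lt_jK; first exact: election_invariant0.
  exact/election_invariantS/IH/ltnW.
have /set0Pn [L CL] := nonempty; exists L; apply/setP => i; rewrite inE.
apply/idP/eqP => [Ci|->//]; apply/id_inj/bitn_inj => //; exact: bits.
Qed.

Section Tour.
Variable L : 'I_n.
Hypothesis leader : candidates K = [set L].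

Local Notation T := (tour_start K).
Local Notation turns := (leader_turns K same_pos).

Definition turn_count := cc (~: [set L]).

Lemma movers_tour s : movers (T + s) = if turns s then ~: [set L] else setT.
Proof.
apply/setP => i; rewrite /movers /protocol ltnNge leq_addr addKn /= inE.
have -> : candidate same_pos (id i) K = (i == L) by move/setP/(_ i): leader; rewrite !inE.
by case: (turns s); rewrite !inE ?andbT ?andbF.
Qed.

Lemma shift_tourS s :
  shift (T + s).+1 = shift (T + s) + (2 * (if turns s then turn_count else nright)) %% n.
Proof. by rewrite shiftS_count movers_tour; case: (turns s); rewrite ?clockwise_countT. Qed.

(* the order of [2 * nright] modulo the odd number [n] *)
Definition rot_order := n %/ gcdn nright n.

Lemma gcdn_nright_gt0 : 0 < gcdn nright n.
Proof. by rewrite gcdn_gt0 n_gt0 orbT. Qed.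

Lemma rot_orderE : n = rot_order * gcdn nright n.
Proof. by rewrite /rot_order divnK // dvdn_gcdr. Qed.

Lemma rot_order_gt0 : 0 < rot_order.
Proof. by rewrite lt0n; apply: contraTneq n_gt0 => eq0; rewrite rot_orderE eq0. Qed.

Lemma rot_order_le : rot_order <= n.
Proof. exact: leq_div. Qed.

Lemma dvdn_rot_order v : (n %| v * nright) = (rot_order %| v).
Proof.
have -> : (n %| v * nright) = (n %| gcdn (v * nright) (v * n)).
  by rewrite dvdn_gcd (dvdn_mull _ (dvdnn n)) andbT.
by rewrite -muln_gcdr {1}rot_orderE dvdn_pmul2r // gcdn_nright_gt0.
Qed.

(* the leader's turn changes the count by one, which is invertible modulo [gcdn nright n] *)
Lemma coprime_turn_count : coprime turn_count (gcdn nright n).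
Proof.
have g_dvd : gcdn nright n %| nright by exact: dvdn_gcdl.
rewrite /turn_count clockwise_countC1.
have := orient_le_nright o L.
case: (o L) => /= oL; apply: (coprime_dvdr g_dvd); last by rewrite addn1 subn0 coprimeSn.
by move: oL; case: (nright) => [|r] // _; rewrite muln1 addn1 !subSS subn0 coprimenS.
Qed.

(* turns of the leader before tour round [s]: it turns at the positive multiples of [rot_order] *)
Definition turns_before s := s.-1 %/ rot_order.
Definition tour_count s := (s - turns_before s) * nright + turns_before s * turn_count.
Definition turns_as_planned s := forall v, v < s -> turns v = (0 < v) && (rot_order %| v).

Lemma turns_before_le s : turns_before s <= s.
Proof. by apply: leq_trans (leq_div _ _) _; apply: leq_pred. Qed.

Lemma turns_beforeS s : turns_before s.+1 = turns_before s + ((0 < s) && (rot_order %| s)).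
Proof. by case: s => [|s]; rewrite /turns_before ?div0n //= divnS ?rot_order_gt0 // addnC. Qed.

Lemma shift_tour_planned s : turns_as_planned s ->
  shift (T + s) = shift T + 2 * tour_count s %[mod n].
Proof.
elim: s => [|s IH] planned; first by rewrite /tour_count /turns_before div0n !muln0 !addn0.
rewrite addnS shift_tourS modnDmr -modnDml IH => [|v /ltnW]; last exact: planned.
rewrite modnDml planned // -addnA -mulnDr; congr ((_ + 2 * _) %% n).
rewrite /tour_count turns_beforeS; have := turns_before_le s.
case: (_ && _) => /=; move: (turns_before s) => f le_fs.
  by rewrite addn1 subSS mulSn; lia.
by rewrite addn0 subSn // mulSn; lia.
Qed.

Lemma same_pos_start_planned s : turns_as_planned s -> same_pos T (T + s) = (n %| tour_count s).
Proof.
by move=> planned; rewrite /same_pos (shift_tour_planned planned) eqn_modDr_dvd dvdn_double.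
Qed.

Lemma tour_period_planned u : turns_as_planned u ->
  tour_period K same_pos u = if rot_order <= u then rot_order else 0.
Proof.
move=> planned; have planned_le k : k <= u -> turns_as_planned k.
  by move=> le_ku v lt_vk; apply/planned/(leq_trans lt_vk).
have count_small k : 0 < k <= rot_order -> tour_count k = k * nright.
  move=> /andP[k_gt0 le_k]; rewrite /tour_count /turns_before divn_small ?subn0 ?addn0 //.
  by rewrite prednK.
have same_small k : 0 < k <= rot_order -> k <= u -> same_pos T (T + k) = (rot_order %| k).
  move=> k_range /planned_le planned_k.
  by rewrite same_pos_start_planned // count_small // dvdn_rot_order.
apply: first_hit_eq rot_order_gt0 _ _ => [k /andP[k_gt0 lt_k] le_ku|le_u].
  by rewrite same_small ?k_gt0 ?(ltnW lt_k) // gtnNdvd.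
by rewrite same_small ?rot_order_gt0 ?leqnn.
Qed.

Lemma turns_planned s : turns_as_planned s.
Proof.
elim: s => [|s IH] v //; rewrite ltnS leq_eqVlt => /predU1P[->|]; last exact: IH.
rewrite /leader_turns (tour_period_planned IH).
case: (leqP rot_order s) => [le_s|lt_s]; first by rewrite rot_order_gt0 (leq_trans rot_order_gt0).
by case: s IH lt_s => [|s] _ lt_s //=; rewrite gtnNdvd.
Qed.

Lemma tour_periodE u : tour_period K same_pos u = if rot_order <= u then rot_order else 0.
Proof. exact/tour_period_planned/turns_planned. Qed.

Lemma shift_tour s : shift (T + s) = shift T + 2 * tour_count s %[mod n].
Proof. exact/shift_tour_planned/turns_planned. Qed.

Lemma turns_before_lt s : 0 < s <= n -> turns_before s < gcdn nright n.
Proof.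
move=> /andP[s_gt0 le_sn]; rewrite /turns_before ltn_divLR ?rot_order_gt0 // mulnC -rot_orderE.
by rewrite prednK.
Qed.

Lemma rot_order_close a b : b <= a -> a - b < rot_order ->
  a * nright = b * nright %[mod n] -> a = b.
Proof.
move=> le_ba lt_ab /eqP; rewrite eqn_mod_dvd ?leq_mul2r ?le_ba ?orbT // -mulnBl dvdn_rot_order.
by have [|ab_gt0 /(dvdn_leq ab_gt0)] := posnP (a - b); lia.
Qed.

Lemma turns_before_close l m : 0 < l -> 0 < m ->
  turns_before l = turns_before m -> l - m < rot_order.
Proof.
case: l => // l; case: m => // m _ _; rewrite /turns_before /= subSS => eq_q.
rewrite (divn_eq l rot_order) (divn_eq m rot_order) eq_q.
have := ltn_pmod l rot_order_gt0; move: (_ * _) (l %% _) (m %% _) => w a b; lia.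
Qed.

Lemma tour_count_inj l m : 0 < l <= n -> 0 < m <= n ->
  tour_count l = tour_count m %[mod n] -> l = m.
Proof.
move=> l_range m_range eq_lm.
have g_dvd_n : gcdn nright n %| n by exact: dvdn_gcdr.
have g_dvd_r : gcdn nright n %| nright by exact: dvdn_gcdl.
have same_turns : turns_before l = turns_before m.
  have : turns_before l * turn_count = turns_before m * turn_count %[mod gcdn nright n].
    have mod_r x : (x * nright) %% gcdn nright n = 0 by apply/eqP/dvdn_mull.
    move: (congr1 (modn^~ (gcdn nright n)) eq_lm); rewrite /= !modn_dvdm //.
    by rewrite -modnDml -[in RHS]modnDml !mod_r.
  move/eqn_modM2r_coprime; rewrite coprime_sym => /(_ coprime_turn_count).
  by rewrite !modn_small ?turns_before_lt.
move: eq_lm; rewrite /tour_count same_turns => /eqP; rewrite eqn_modDr => /eqP cong.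
have le_fl := turns_before_le l; have le_fm := turns_before_le m; rewrite same_turns in le_fl.
have [l_gt0 _] := andP l_range; have [m_gt0 _] := andP m_range.
have close_lm := turns_before_close l_gt0 m_gt0 same_turns.
have close_ml := turns_before_close m_gt0 l_gt0 (esym same_turns).
move: (turns_before m) le_fl le_fm cong => f le_fl le_fm cong.
have [le_ml|/ltnW le_lm] := leqP m l; apply/eqP; rewrite -(eqn_sub2rE le_fl le_fm); apply/eqP.
- apply: rot_order_close cong; first exact: leq_sub2r.
  by rewrite subnBA // subnK.
- symmetry; apply: rot_order_close (esym cong); first exact: leq_sub2r.
  by rewrite subnBA // subnK.
Qed.

Lemma same_pos_tour_inj l m : 0 < l <= n -> 0 < m <= n -> same_pos (T + l) (T + m) -> l = m.
Proof.
move=> l_range m_range; rewrite /same_pos !shift_tour eqn_modDl ![2 * _]mulnC => /eqP.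
by move/(eqn_modM2r_coprime coprime_n2)/tour_count_inj; apply.
Qed.

Lemma same_pos_tour_rot_order : same_pos T (T + rot_order).
Proof.
rewrite (same_pos_start_planned (@turns_planned rot_order)) /tour_count /turns_before.
by rewrite divn_small ?ltn_predL ?rot_order_gt0 // subn0 mul0n addn0 dvdn_rot_order.
Qed.

Lemma uniq_tour_pos : uniq [seq shift (T + l) %% n | l <- iota 1 n].
Proof.
rewrite map_inj_in_uniq ?iota_uniq // => l m; rewrite !mem_iota !add1n !ltnS => l_range m_range.
by move/eqP; apply: same_pos_tour_inj.
Qed.

Lemma tour_pos_all x : x < n -> x \in [seq shift (T + l) %% n | l <- iota 1 n].
Proof.
move=> lt_xn; have sub : {subset [seq shift (T + l) %% n | l <- iota 1 n] <= iota 0 n}.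
  by move=> _ /mapP[l _ ->]; rewrite mem_iota ltn_pmod ?n_gt0.
have size_le : size (iota 0 n) <= size [seq shift (T + l) %% n | l <- iota 1 n].
  by rewrite size_map !size_iota.
by have [_ ->] := uniq_min_size uniq_tour_pos sub size_le; rewrite mem_iota.
Qed.

Lemma revisits_tour_small L' s : (L' == 0) || (L' == rot_order) -> s <= n ->
  ~~ revisits K same_pos L' s.
Proof.
rewrite /revisits => /orP[]/eqP-> le_sn //=; rewrite rot_order_gt0 /=.
apply/negP => /andP[lt_s /hasP[l]]; rewrite mem_iota add0n => /andP[_ lt_ls].
have s_range : 0 < s <= n by rewrite le_sn (leq_trans rot_order_gt0 (ltnW lt_s)).
have [->|l_gt0] := posnP l; rewrite ?addn0 => same.
- move: same_pos_tour_rot_order; rewrite /same_pos => /eqP eq_T; rewrite /same_pos eq_T in same.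
  have := @same_pos_tour_inj rot_order s; rewrite rot_order_gt0 rot_order_le s_range.
  by move=> /(_ isT isT same) eq_s; rewrite eq_s ltnn in lt_s.
- have := @same_pos_tour_inj l s; rewrite l_gt0 (leq_trans (ltnW lt_ls) le_sn) s_range.
  by move=> /(_ isT isT same) eq_l; rewrite eq_l ltnn in lt_ls.
Qed.

Lemma revisits_tour_last : revisits K same_pos rot_order n.+1.
Proof.
rewrite /revisits rot_order_gt0 ltnS rot_order_le !andTb.
have /mapP[l l_in same] := tour_pos_all (ltn_pmod (shift (T + n.+1)) n_gt0).
apply/hasP; exists l; first by move: l_in; rewrite !mem_iota add0n add1n ltnS => /andP[_].
by rewrite /same_pos same.
Qed.

Lemma first_revisit_tour M :
  first_revisit K same_pos (tour_period K same_pos M) M = if n < M then n.+1 else 0.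
Proof.
apply: first_hit_eq => // [s /andP[_ lt_s] _|lt_nM].
  by apply: revisits_tour_small; [rewrite tour_periodE; case: ifP; rewrite eqxx ?orbT | ].
rewrite tour_periodE (leq_trans rot_order_le (ltnW lt_nM)); exact: revisits_tour_last.
Qed.

Lemma nontrivial_tour_start : 1 < n ->
  nontrivial n (rotation_index (fun i : 'I_n => ~~ ((i == L) && same_pos T T.+1) == o i)).
Proof.
move=> n_gt1; have consensus : same_pos T T.+1 = (n %| nright).
  by rewrite -[T]addn0 same_posS movers_tour /leader_turns /= clockwise_countT.
rewrite consensus; have [r_dvd|r_ndvd] := boolP (n %| nright); last first.
  rewrite (@rotation_index_set _ o _ setT) ?clockwise_countT ?nontrivial_double // => i.
  by rewrite inE andbF.
rewrite (@rotation_index_set _ o _ (~: [set L])) => [|i]; last by rewrite !inE andbT.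
apply: nontrivial_double => //; have := clockwise_count_le o (~: [set L]).
have := orient_le_nright o L; rewrite clockwise_countC1.
rewrite /nright; case/orP: (dvdn_bounded (card_le_ord _) r_dvd) => /eqP->;
  case: (o L) => //= _ tc_le.
- by rewrite gtnNdvd.
- by rewrite gtnNdvd //; lia.
- by rewrite addn1 subn0 ltnn in tc_le.
Qed.

End Tour.
End Election.

Definition agree_upto t (same same' : nat -> nat -> bool) :=
  forall l m, l <= t -> m <= t -> same l m = same' l m.

Lemma agree_uptoW t t' same same' : t' <= t -> agree_upto t same same' -> agree_upto t' same same'.
Proof. by move=> le_t agree l m le_l le_m; apply: agree; apply: leq_trans le_t. Qed.

Lemma candidate_agree k j same same' :
  agree_upto (4 * j) same same' -> candidate same k j = candidate same' k j.
Proof.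
elim: j => [|j IH] agree //=; rewrite IH; last by apply: agree_uptoW agree; lia.
by rewrite !agree //; lia.
Qed.

Lemma tour_period_agree K m same same' :
  agree_upto (tour_start K + m) same same' -> tour_period K same m = tour_period K same' m.
Proof. by move=> agree; apply: eq_first_hit => k le_km; rewrite agree ?leq_add2l ?leq_addr. Qed.

Lemma protocol_agree K k t same same' :
  agree_upto t same same' -> protocol K same k t = protocol K same' k t.
Proof.
move=> agree; rewrite /protocol /leader_turns; case: ltnP => [_|le_Tt].
  by rewrite (candidate_agree _ (agree_uptoW _ agree)) // mulnC leq_trunc_div.
rewrite (candidate_agree _ (agree_uptoW le_Tt agree)).
by rewrite (tour_period_agree (agree_uptoW _ agree)) // subnKC.
Qed.

Lemma first_revisit_agree K L M same same' :
  agree_upto (tour_start K + M) same same' -> first_revisit K same L M = first_revisit K same' L M.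
Proof.
move=> agree; apply: eq_first_hit => s le_sM; congr [&& _, _ & _]; apply: eq_in_has => l.
by rewrite mem_iota add0n => /andP[_ lt_ls]; rewrite agree ?leq_add2l // (leq_trans (ltnW lt_ls)).
Qed.

Section Circle.
Variable R : realType.
Local Open Scope ring_scope.

Definition wrap1 (x : R) := if x < 1 then x else x - 1.

Lemma cwd_wrap (a b c : R) : 0 <= a < 1 -> 0 <= b < 1 -> 0 <= c < 1 ->
  wrap1 (cwd a b + cwd b c) = cwd a c.
Proof.
move=> /andP[? ?] /andP[? ?] /andP[? ?]; rewrite /wrap1 /cwd.
by case: (leP a b) => ?; case: (leP b c) => ?; case: (leP a c) => ?; case: ltP => ?; lra.
Qed.

Lemma cwd_injr (a b c : R) : 0 <= a < 1 -> 0 <= b < 1 -> 0 <= c < 1 ->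
  cwd a b = cwd a c -> b = c.
Proof.
move=> /andP[? ?] /andP[? ?] /andP[? ?]; rewrite /cwd.
by case: (leP a b) => ?; case: (leP a c) => ? ?; lra.
Qed.

Lemma cwd_injl (a b c : R) : 0 <= a < 1 -> 0 <= b < 1 -> 0 <= c < 1 ->
  cwd b a = cwd c a -> b = c.
Proof.
move=> /andP[? ?] /andP[? ?] /andP[? ?]; rewrite /cwd.
by case: (leP b a) => ?; case: (leP c a) => ? ?; lra.
Qed.

Lemma cwdxx (a : R) : cwd a a = 0.
Proof. by rewrite /cwd lexx subrr. Qed.

End Circle.

Section Agent.
Variable R : realType.
Local Open Scope ring_scope.

Definition displacement (h : seq R) : R := foldl (fun x y => wrap1 (x + y)) 0 h.

Definition same_in (h : seq R) l m :=
  [&& (l <= size h)%N, (m <= size h)%N & displacement (take l h) == displacement (take m h)].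

Definition strategy K (k : nat) (h : seq R) := protocol K (same_in h) k (size h).

Definition is_leader K (k : nat) (h : seq R) := candidate (same_in h) k K.

Definition nontrivial_dir K (k : nat) (h : seq R) :=
  ~~ (is_leader K k h && same_in h (tour_start K) (tour_start K).+1).

(* [D] is the first round of the tour repeating a position seen after the period; the
   nonzero displacements before it are the positions of the other agents *)
Definition discovered K (k : nat) (h : seq R) : option (seq R) :=
  let M := (size h - tour_start K)%N in
  let D := first_revisit K (same_in h) (tour_period K (same_in h) M) M in
  if (0 < D)%N then
    Some [seq x <- [seq displacement (take (tour_start K + l) h) | l <- iota 1 D.-1] | x != 0]
  else None.

Variables (n : nat) (p : 'I_n -> R) (o : 'I_n -> bool) (id : 'I_n -> nat) (K : nat).
Hypothesis p_range : forall i, 0 <= p i < 1.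
Hypothesis p_incr : forall i j : 'I_n, (i < j)%N -> p i < p j.

Local Notation hist := (history p o id (strategy K)).

Definition total_shift t := (run p o id (strategy K) t).1.

Lemma runS t : run p o id (strategy K) t.+1 =
  let sh := total_shift t in let h := hist t in
  let r := rotation_index (fun i => strategy K (id i) (h i) == o i) in
  ((sh + r)%N, fun i => rcons (h i) (observed p o i (rot i sh) (rot i (sh + r)))).
Proof. by rewrite /= /total_shift /history; case: run. Qed.

Lemma historyS t i :
  hist t.+1 i =
  rcons (hist t i) (observed p o i (rot i (total_shift t)) (rot i (total_shift t.+1))).
Proof. by rewrite {1}/history /total_shift runS. Qed.

Lemma size_history t i : size (hist t i) = t.
Proof. by elim: t => [|t IH] //; rewrite historyS size_rcons IH. Qed.

Lemma take_history t l i : (l <= t)%N -> take l (hist t i) = hist l i.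
Proof.
elim: t => [|t IH]; first by rewrite leqn0 => /eqP->.
rewrite leq_eqVlt => /predU1P[->|]; first by rewrite take_oversize ?size_history.
by rewrite ltnS => le_lt; rewrite historyS -cats1 takel_cat ?size_history // IH.
Qed.

Lemma p_inj : injective p.
Proof.
by move=> a b eq_ab; apply/val_inj/eqP; case: ltngtP => // /p_incr; rewrite eq_ab ltxx.
Qed.

Lemma observed_inj i : injective (observed p o i i).
Proof.
move=> j j'; rewrite /observed; case: (o i) => eq_obs; apply: p_inj.
  exact: (cwd_injr (p_range i) (p_range j) (p_range j') eq_obs).
exact: (cwd_injl (p_range i) (p_range j) (p_range j') eq_obs).
Qed.

Lemma observed_eq0 i j : (observed p o i i j == 0) = (j == i).
Proof.
have obs_ii : observed p o i i i = 0 by rewrite /observed; case: (o i); rewrite cwdxx.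
by apply/eqP/eqP => [|->//]; rewrite -obs_ii => /observed_inj.
Qed.

Lemma rot0 (i : 'I_n) : rot i 0 = i.
Proof. by apply/val_inj; rewrite /= addn0 modn_small. Qed.

Lemma eq_rot (i : 'I_n) x y : (rot i x == rot i y) = (x == y %[mod n])%N.
Proof. by rewrite -(inj_eq val_inj) /= eqn_modDl. Qed.

Lemma displacement_history t i :
  displacement (hist t i) = observed p o i i (rot i (total_shift t)).
Proof.
elim: t => [|t IH]; first by rewrite /total_shift /= rot0 /observed; case: (o i); rewrite cwdxx.
rewrite historyS /displacement foldl_rcons -/(displacement _) IH /observed.
by case: (o i); [|rewrite addrC]; rewrite cwd_wrap.
Qed.

Lemma same_in_history t i : agree_upto t (same_in (hist t i)) (same_pos n total_shift).
Proof.
move=> l m le_l le_m; rewrite /same_in size_history le_l le_m !take_history //.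
by rewrite !displacement_history (inj_eq (@observed_inj i)) eq_rot.
Qed.

Lemma total_shiftS t : total_shift t.+1 =
  (total_shift t + rotation_index (fun i => protocol K (same_pos n total_shift) (id i) t == o i))%N.
Proof.
rewrite {1}/total_shift runS /=; congr (_ + _)%N; rewrite /rotation_index.
congr ((2 * _) %% n)%N; apply: eq_card => i; rewrite !inE /strategy size_history.
by rewrite (protocol_agree _ _ (@same_in_history t i)).
Qed.

End Agent.

Definition id_bits N := (trunc_log 2 N).+1.

Section Instance.
Variables (R : realType) (N n : nat) (p : 'I_n -> R) (o : 'I_n -> bool) (id : 'I_n -> nat).
Hypothesis valid : valid_instance p id N.
Hypothesis n_odd : odd n.

Local Notation K := (id_bits N).
Local Notation T := (tour_start K).
Local Notation hist := (history p o id (strategy K)).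
Local Notation shift := (total_shift p o id K).

Lemma p_range i : (0 <= p i < 1)%R.
Proof. by case: valid => _ _ _ _ []. Qed.

Lemma p_incr (i j : 'I_n) : i < j -> (p i < p j)%R.
Proof. by case: valid => _ _ _ _ [_]; apply. Qed.

Let shiftS := total_shiftS o id K p_range p_incr.

Lemma id_lt_bits i : id i < 2 ^ K.
Proof.
by case: valid => _ _ _ /(_ i) /andP[_ le_idN] _; apply: leq_ltn_trans le_idN (trunc_log_ltn _ _).
Qed.

Lemma leader_elected : exists L, candidates id shift K = [set L].
Proof. by case: valid => _ _ id_inj _ _; exact: leader_exists n_odd shiftS id_inj id_lt_bits. Qed.

Lemma candidate_history t i : T <= t ->
  candidate (same_in (hist t i)) (id i) K = (i \in candidates id shift K).
Proof.
move=> le_Tt; rewrite inE; apply: candidate_agree.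
exact: agree_uptoW le_Tt (same_in_history o id K p_range p_incr i).
Qed.

Lemma leader_unique : #|[pred i | is_leader K (id i) (hist T i)]| = 1.
Proof.
have [L leader] := leader_elected; rewrite -(card1 L); apply: eq_card => i.
by rewrite !inE /is_leader candidate_history // leader inE.
Qed.

Lemma nontrivial_dir_round :
  nontrivial n (rotation_index (fun i => nontrivial_dir K (id i) (hist T.+1 i) == o i)).
Proof.
have [L leader] := leader_elected; have [n_gt4 _ _ _ _] := valid.
have := nontrivial_tour_start n_odd shiftS leader (ltn_trans (isT : 1 < 4) n_gt4).
congr nontrivial.
rewrite /rotation_index; congr ((2 * _) %% n); apply: eq_card => i; rewrite !inE.
rewrite /nontrivial_dir /is_leader candidate_history // leader inE.
by rewrite (same_in_history o id K p_range p_incr _).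
Qed.

Lemma first_revisit_history t i : T <= t ->
  first_revisit K (same_in (hist t i)) (tour_period K (same_in (hist t i)) (t - T)) (t - T) =
  if n < t - T then n.+1 else 0.
Proof.
move=> le_Tt; have [L leader] := leader_elected.
have agree : agree_upto (T + (t - T)) (same_in (hist t i)) (same_pos n shift).
  by rewrite subnKC //; exact: (same_in_history o id K p_range p_incr _).
rewrite (tour_period_agree agree) (first_revisit_agree _ agree).
exact (first_revisit_tour n_odd shiftS leader (t - T)).
Qed.

Lemma perm_tour_rot i : perm_eq [seq rot i (shift (T + l)) | l <- iota 1 n] (enum 'I_n).
Proof.
have [L leader] := leader_elected.
have uniq_rot : uniq [seq rot i (shift (T + l)) | l <- iota 1 n].
  rewrite map_inj_in_uniq ?iota_uniq // => l m; rewrite !mem_iota !add1n !ltnS.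
  move=> l_range m_range /eqP; rewrite eq_rot.
  exact (same_pos_tour_inj n_odd shiftS leader l_range m_range).
have sub : {subset [seq rot i (shift (T + l)) | l <- iota 1 n] <= enum 'I_n}.
  by move=> j _; rewrite mem_enum.
have size_le : size (enum 'I_n) <= size [seq rot i (shift (T + l)) | l <- iota 1 n].
  by rewrite size_enum_ord size_map size_iota.
have [_ same_mem] := uniq_min_size uniq_rot sub size_le.
by apply: uniq_perm; rewrite ?enum_uniq.
Qed.

Lemma discovered_sound i t a :
  discovered K (id i) (hist t i) = Some a -> perm_eq a (relative_positions p o i).
Proof.
rewrite /discovered size_history; case: (leqP T t) => [le_Tt|lt_tT]; last first.
  by rewrite (eqP (ltnW lt_tT)).
rewrite first_revisit_history //; case: (ltnP n (t - T)) => // lt_n [<-] /=.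
have -> : [seq displacement (take (T + l) (hist t i)) | l <- iota 1 n] =
          [seq observed p o i i j | j <- [seq rot i (shift (T + l)) | l <- iota 1 n]].
  rewrite -map_comp; apply/eq_in_map => l; rewrite mem_iota => /andP[_ lt_l] /=.
  by rewrite take_history ?(displacement_history o id K p_range) //; lia.
rewrite filter_map /relative_positions; apply: perm_map.
rewrite (eq_filter (a2 := fun j => j != i)); last first.
  by move=> j; rewrite /= (observed_eq0 o p_range p_incr).
exact/perm_filter/perm_tour_rot.
Qed.

Lemma discovered_complete i : discovered K (id i) (hist (n + 5 * K) i) != None.
Proof.
have le_T : T <= n + 5 * K by rewrite /tour_start; lia.
have lt_n : n < n + 5 * K - T by rewrite /tour_start /id_bits; lia.
by rewrite /discovered size_history first_revisit_history // lt_n.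
Qed.

End Instance.

Local Open Scope ring_scope.

Theorem corollary3 :
  exists C : nat,
  (* leader election in O(log N) rounds *)
  (forall (R : realType) (N : nat),
     exists (T : nat) (S : nat -> seq R -> bool) (leader : nat -> seq R -> bool),
       (T <= C * (trunc_log 2 N).+1)%N /\
       forall (n : nat) (p : 'I_n -> R) (o : 'I_n -> bool) (id : 'I_n -> nat),
         valid_instance p id N -> odd n ->
         #|[pred i | leader (id i) (history p o id S T i)]| = 1%N) /\
  (* nontrivial move in O(log N) rounds *)
  (forall (R : realType) (N : nat),
     exists (T : nat) (S : nat -> seq R -> bool) (dir : nat -> seq R -> bool),
       (T <= C * (trunc_log 2 N).+1)%N /\
       forall (n : nat) (p : 'I_n -> R) (o : 'I_n -> bool) (id : 'I_n -> nat),
         valid_instance p id N -> odd n ->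
         nontrivial n (rotation_index (fun i : 'I_n => dir (id i) (history p o id S T i) == o i))) /\
  (* location discovery in n + O(log N) rounds: an agent's announced answer
     is always correct, and every agent has announced after n + O(log N) rounds *)
  (forall (R : realType) (N : nat),
     exists (S : nat -> seq R -> bool) (ans : nat -> seq R -> option (seq R)),
       forall (n : nat) (p : 'I_n -> R) (o : 'I_n -> bool) (id : 'I_n -> nat),
         valid_instance p id N -> odd n ->
         forall i : 'I_n,
           (forall (t : nat) (a : seq R),
              ans (id i) (history p o id S t i) = Some a ->
              perm_eq a (relative_positions p o i)) /\
           ans (id i) (history p o id S (n + C * (trunc_log 2 N).+1) i) != None).
Proof.
exists 5; split; [|split] => R N.
- exists (tour_start (id_bits N)), (strategy (id_bits N)), (is_leader (id_bits N)).
  split; first by rewrite /tour_start /id_bits; lia.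
  by move=> n p o id valid n_odd; exact: leader_unique.
- exists (tour_start (id_bits N)).+1, (strategy (id_bits N)), (nontrivial_dir (id_bits N)).
  split; first by rewrite /tour_start /id_bits; lia.
  by move=> n p o id valid n_odd; exact: nontrivial_dir_round.
- exists (strategy (id_bits N)), (discovered (id_bits N)) => n p o id valid n_odd i.
  by split; [exact: discovered_sound | exact: discovered_complete].
Qed.
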